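(* Let $E$ be a real vector space and $F$ a non-degenerate real vector space. Let $r\ge 1$ and let $A,B:E^r\to F$ be symmetric $r$-linear maps. If the function $f_A-f_B:E\to F$ is constant on some subset $U\subseteq E$ with $\mathrm{Star}^r(U,E)\neq\emptyset$, then $A=B$.
   Context: No topology is assumed on $E$ or $F$, and $A,B$ need not be continuous. For a symmetric $r$-linear map $A:E^r\to F$, its monomial function is $f_A:E\to F$, $f_A(x)=A(x,x,\dots,x)$. A real vector space $F$ is called non-degenerate if for every nonzero $v\in F$ there is a linear functional $\lambda:F\to\mathbb R$ with $\lambda(v)\neq 0$. For $U\subseteq E$, $\mathrm{Star}(U,E)$ is the set of $v\in U$ such that for every $w\in E$ there is $\delta_w>0$ with $v+tw\in U$ whenever $|t|\le\delta_w$. Set $\mathrm{Star}^1(U,E)=\mathrm{Star}(U,E)$ and $\mathrm{Star}^r(U,E)=\mathrm{Star}^{r-1}(\mathrm{Star}(U,E),E)$. *)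

From HB Require Import structures.
From mathcomp Require Import all_boot all_order all_fingroup all_algebra.
From mathcomp Require Import classical_sets reals.
Set Implicit Arguments. Unset Strict Implicit. Unset Printing Implicit Defensive.
Import Order.TTheory GRing.Theory Num.Theory.
Local Open Scope ring_scope.
Local Open Scope classical_set_scope.

Definition upd (E : Type) (r : nat) (v : 'I_r -> E) (i : 'I_r) (x : E) : 'I_r -> E :=
  fun j => if j == i then x else v j.

Definition multilinear (R : realType) (E F : lmodType R) (r : nat)
  (A : ('I_r -> E) -> F) : Prop :=
  forall (i : 'I_r) (v : 'I_r -> E) (a : R) (x y : E),
    A (upd v i (a *: x + y)) = a *: A (upd v i x) + A (upd v i y).

Definition symmetric_map (E F : Type) (r : nat) (A : ('I_r -> E) -> F) : Prop :=
  forall (s : 'S_r) (v : 'I_r -> E), A (fun j => v (s j)) = A v.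

Definition monomial (E F : Type) (r : nat) (A : ('I_r -> E) -> F) : E -> F :=
  fun x => A (fun _ => x).

Definition lin_functional (R : realType) (F : lmodType R) (lam : F -> R) : Prop :=
  forall (a : R) (x y : F), lam (a *: x + y) = a * lam x + lam y.

Definition nondegenerate_space (R : realType) (F : lmodType R) : Prop :=
  forall v : F, v != 0 -> exists lam : F -> R, lin_functional lam /\ lam v != 0.

Definition Star (R : realType) (E : lmodType R) (U : set E) : set E :=
  [set v | U v /\ forall w : E, exists2 d : R, 0 < d &
            forall t : R, `|t| <= d -> U (v + t *: w)].

Definition StarN (R : realType) (E : lmodType R) (r : nat) (U : set E) : set E :=
  iter r (@Star R E) U.

From HB Require Import structures.
From mathcomp Require Import all_boot all_order all_fingroup all_algebra.
From mathcomp Require Import classical_sets reals.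
From mathcomp Require Import boolp.
Set Implicit Arguments. Unset Strict Implicit. Unset Printing Implicit Defensive.
Import Order.TTheory GRing.Theory Num.Theory.
Local Open Scope ring_scope.
Local Open Scope classical_set_scope.

(* Suppose A v <> B v.  Choose a functional lam with lam (A v - B v) <> 0;
   then L := lam \o (A - B) is a symmetric r-linear real form whose
   monomial function L(x,...,x) is constant on U.  Write [fill k w x] for
   the argument list (w_0, ..., w_(k-1), x, ..., x).  By induction on k we
   show that, for every w, the map x |-> L (fill k w x) is constant on
   Star^k(U):  if x lies in Star(Star^k U), then t |-> L (fill k w (x + t w_k))
   is a polynomial in t that is constant for |t| small, so its linear
   coefficient vanishes; by symmetry that coefficient is (r - k) times
   L (fill (k+1) w x), which is therefore 0.  Taking k = r - 1 and a point
   of Star^r(U) gives L w = 0 for every w, contradicting L v <> 0. *)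

(* A real polynomial that is constant on a neighbourhood [-d, d] of 0 is a
   constant polynomial: it has infinitely many points with a given value. *)
Lemma poly_locally_const (R : realFieldType) (p : {poly R}) (d c : R) :
  0 < d -> (forall t, `|t| <= d -> p.[t] = c) -> p = c%:P.
Proof.
move=> d_gt0 p_const; apply/eqP; rewrite -subr_eq0; apply/eqP.
set q := p - c%:P.
pose pts := [seq d / (i.+1)%:R | i <- iota 0 (size q)].
apply: (@roots_geq_poly_eq0 _ q pts); last by rewrite size_map size_iota.
- apply/allP => _ /mapP [i _ ->].
  rewrite /root /q hornerD hornerN hornerC p_const ?subrr //.
  have d_ge0 : 0 <= d := ltW d_gt0.
  rewrite ger0_norm ?divr_ge0 // ler_pdivrMr ?ltr0Sn //.
  by rewrite ler_peMr // (ler_nat _ 1).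
- rewrite map_inj_uniq ?iota_uniq // => i j.
  move/(mulfI (lt0r_neq0 d_gt0))/invr_inj/eqP.
  by rewrite eqr_nat => /eqP [].
Qed.

Definition form_multilinear (R : realType) (E : lmodType R) (r : nat)
  (L : ('I_r -> E) -> R) : Prop :=
  forall (i : 'I_r) (v : 'I_r -> E) (a : R) (x y : E),
    L (upd v i (a *: x + y)) = a * L (upd v i x) + L (upd v i y).

Section ScalarForm.
Variables (R : realType) (E : lmodType R) (r : nat).
Variable L : ('I_r -> E) -> R.

Hypothesis L_lin : form_multilinear L.

Lemma form_upd0 (i : 'I_r) (v : 'I_r -> E) : L (upd v i 0) = 0.
Proof.
have := L_lin i v 1 0 0; rewrite scaler0 add0r mul1r.
by rewrite -{1}[L _]addr0 => /addrI <-.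
Qed.

Lemma form_line_poly (a b : 'I_r -> E) (s : seq 'I_r) : uniq s ->
  exists p : {poly R},
    [/\ forall t, p.[t] = L (fun i => if i \in s then a i + t *: b i else a i),
        p`_0 = L a & p`_1 = \sum_(i <- s) L (upd a i (b i))].
Proof.
elim: s a => [|j s IH] a /=.
  by move=> _; exists (L a)%:P; split; rewrite ?big_nil ?coefC // => t; rewrite hornerC.
case/andP => j_notin_s s_uniq.
have [p [p_val p0 p1]] := IH a s_uniq.
have [q [q_val q0 q1]] := IH (upd a j (b j)) s_uniq.
pose V t i := if i \in s then a i + t *: b i else a i.
exists (p + 'X * q); split.
- move=> t; rewrite hornerD hornerM hornerX p_val q_val.
  have -> : (fun i => if i \in j :: s then a i + t *: b i else a i)
            = upd (V t) j (t *: b j + a j).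
    apply/funext => i; rewrite /upd in_cons.
    by case: eqVneq => [->|//]; rewrite addrC.
  rewrite L_lin addrC; congr (_ * L _ + L _); apply/funext => i;
  by rewrite /upd /V; case: eqVneq => [->|]; rewrite ?(negbTE j_notin_s).
- by rewrite coefD coefXM /= p0 addr0.
- by rewrite coefD coefXM /= p1 q0 big_cons addrC.
Qed.

Lemma form_line_coef1 (a b : 'I_r -> E) :
  exists p : {poly R}, (forall t, p.[t] = L (fun i => a i + t *: b i))
                       /\ p`_1 = \sum_i L (upd a i (b i)).
Proof.
have [p [p_val _ p1]] := @form_line_poly a b _ (index_enum_uniq 'I_r).
exists p; split=> [t|//]; rewrite p_val; congr L.
by apply/funext => i; rewrite mem_index_enum.
Qed.

Definition fill (k : nat) (w : 'I_r -> E) (x : E) : 'I_r -> E :=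
  fun i => if (i < k)%N then w i else x.

Lemma fill_all (w : 'I_r -> E) (x : E) : fill r w x = w.
Proof. by apply/funext => i; rewrite /fill ltn_ord. Qed.

Lemma fill_line (k : nat) (w : 'I_r -> E) (x y : E) (t : R) :
  fill k w (x + t *: y) = fun i => fill k w x i + t *: fill k (fun=> 0) y i.
Proof. by apply/funext => i; rewrite /fill; case: ltnP; rewrite ?scaler0 ?addr0. Qed.

Hypothesis L_sym : forall (s : 'S_r) (v : 'I_r -> E), L (fun j => v (s j)) = L v.

Lemma upd_fill_tperm (j i : 'I_r) (w : 'I_r -> E) (x : E) : (j <= i)%N ->
  upd (fill j w x) i (w j) = fun m => fill j.+1 w x (tperm j i m).
Proof.
move=> le_ji; apply/funext => m; rewrite /upd /fill.
case: tpermP => [->|->|m_neq_j m_neq_i].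
- case: eqVneq => [->|ij]; first by rewrite ltnSn.
  have lt_ji : (j < i)%N.
    by rewrite ltn_neqAle le_ji andbT; apply: contra ij => /eqP/val_inj ->.
  by rewrite ltnn ltnS leqNgt lt_ji.
- by rewrite eqxx ltnSn.
- rewrite (introF eqP m_neq_i) [(m < j.+1)%N]ltnS [(m <= j)%N]leq_eqVlt.
  by have /negbTE -> : (m != j :> nat) by apply/eqP => /val_inj.
Qed.

Lemma fill_first_variation (j : 'I_r) (w : 'I_r -> E) (x : E) :
  \sum_i L (upd (fill j w x) i (fill j (fun=> 0) (w j) i))
  = L (fill j.+1 w x) *+ #|[pred i : 'I_r | (j <= i)%N]|.
Proof.
rewrite -sumr_const [RHS]big_mkcond; apply: eq_bigr => i _; rewrite inE /=.
case: leqP => [le_ji|lt_ij]; rewrite {2}/fill.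
- by rewrite ltnNge le_ji /= upd_fill_tperm // L_sym.
- by rewrite lt_ij form_upd0.
Qed.

Lemma fill_star_vanish (j : 'I_r) (w : 'I_r -> E) (V : set E) (c : R) :
  (forall y, V y -> L (fill j w y) = c) ->
  forall x, Star V x -> L (fill j.+1 w x) = 0.
Proof.
move=> V_const x [_ x_star].
have [d d_gt0 line_in_V] := x_star (w j).
have [p [p_val p1]] := form_line_coef1 (fill j w x) (fill j (fun=> 0) (w j)).
have p_const : p = c%:P.
  apply: (@poly_locally_const _ p d c d_gt0) => t le_td.
  by rewrite p_val -(V_const _ (line_in_V t le_td)) fill_line.
have /eqP := p1; rewrite p_const coefC /= fill_first_variation eq_sym.
rewrite mulrn_eq0 => /orP [|/eqP //].
have : (0 < #|[pred i : 'I_r | (j <= i)%N]|)%N.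
  by apply/card_gt0P; exists j; rewrite inE /=.
by rewrite lt0n => /negPf ->.
Qed.

Lemma fill_const_on_star (U : set E) (c : R) :
  (forall x, U x -> L (fun=> x) = c) ->
  forall k, (k < r)%N -> forall w, exists c' : R,
    forall x, StarN k U x -> L (fill k w x) = c'.
Proof.
move=> U_const; elim=> [_ w|k IH lt_kr w].
  by exists c => x Ux; rewrite -(U_const x Ux).
have lt_k : (k < r)%N := ltnW lt_kr.
have [c' const_k] := IH lt_k w.
exists 0 => x; exact: (@fill_star_vanish (Ordinal lt_k) w _ c' const_k x).
Qed.

End ScalarForm.

Lemma functional_of_difference (R : realType) (E F : lmodType R) (r : nat)
  (A B : ('I_r -> E) -> F) (lam : F -> R) :
  multilinear A -> multilinear B -> lin_functional lam ->
  form_multilinear (fun w => lam (A w - B w)).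
Proof.
move=> mA mB lam_lin i v a x y; rewrite mA mB -lam_lin; congr lam.
by rewrite scalerBr addrACA opprD.
Qed.

Theorem mainTheorem1 (R : realType) (E F : lmodType R) (r : nat)
  (A B : ('I_r -> E) -> F) (U : set E) :
  nondegenerate_space F -> (0 < r)%N ->
  multilinear A -> symmetric_map A ->
  multilinear B -> symmetric_map B ->
  (exists c : F, forall x, U x -> monomial A x - monomial B x = c) ->
  StarN r U !=set0 ->
  A = B.
Proof.
move=> nondeg r_gt0 mA sA mB sB [c U_const] [x0 x0_star].
apply/funext => v; apply/eqP; rewrite -subr_eq0.
apply: contraT => /nondeg [lam [lam_lin /negP[]]]; apply/eqP.
pose L w := lam (A w - B w).
have L_lin : form_multilinear L := functional_of_difference mA mB lam_lin.
have L_sym (s : 'S_r) w : L (fun j => w (s j)) = L w by rewrite /L sA sB.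
have LU x : U x -> L (fun=> x) = lam c by move/U_const; rewrite /L => <-.
have lt_pred : (r.-1 < r)%N by rewrite ltn_predL.
have [c' const_j] := fill_const_on_star L_lin L_sym LU lt_pred v.
pose j := Ordinal lt_pred.
have x0_starj : Star (StarN j U) x0 by rewrite /StarN -iterS prednK.
have := fill_star_vanish L_lin L_sym (j := j) const_j x0_starj.
by rewrite prednK // fill_all.
Qed.
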